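(* Let $G$ be a pro-$p$ group. Suppose that for every open subgroup $U$ of $G$ there exists a Frattini-cover $\phi: U\to K$ onto a pro-$p$ group $K$ such that $(K,M,\Phi(M))$ is a hierarchical triple for every maximal subgroup $M$ of $K$. Then $G$ is strongly Frattini-resistant.
   Context: $p$ is a prime; subgroups are closed; $\Phi(H)$ is the Frattini subgroup. A Frattini-cover is an epimorphism $\phi: G\to H$ of pro-$p$ groups with $\ker\phi\le\Phi(G)$. A triple $(G,K,H)$ with $H\le K\le G$ is hierarchical if $x\in G$, $x^p\in H$ imply $x\in K$. $G$ is strongly Frattini-resistant if $(G,H,\Phi(H))$ is hierarchical for every subgroup $H$ of $G$. *)

From HB Require Import structures.
From mathcomp Require Import all_boot all_order.
From mathcomp Require Import all_classical all_reals all_analysis.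
Set Implicit Arguments. Unset Strict Implicit. Unset Printing Implicit Defensive.
Local Open Scope classical_set_scope.

Section GroupNotions.
Variables (T : topologicalType) (mul : T -> T -> T) (one : T) (inv : T -> T).

Definition gpow (x : T) (n : nat) : T := iter n (mul x) one.

Definition group_axioms :=
  [/\ forall x y z, mul x (mul y z) = mul (mul x y) z,
      forall x, mul one x = x,
      forall x, mul x one = x,
      forall x, mul (inv x) x = one &
      forall x, mul x (inv x) = one].

Definition abs_subgroup (H : set T) :=
  [/\ H one, forall x y, H x -> H y -> H (mul x y) & forall x, H x -> H (inv x)].

(* "subgroup" = closed subgroup (standing convention of the paper) *)
Definition subgroup (H : set T) := abs_subgroup H /\ closed H.

Definition open_subgroup (U : set T) := subgroup U /\ open U.

Definition normal_set (N : set T) :=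
  forall g x, N x -> N (mul (mul (inv g) x) g).

Definition open_normal_subgroup (N : set T) := open_subgroup N /\ normal_set N.

(* the index of N in T is a power of p: a full, irredundant list of left
   coset representatives has length p ^ n *)
Definition ppower_index (p : nat) (N : set T) :=
  exists (n : nat) (s : seq T),
    [/\ size s = (p ^ n)%N,
        forall x, exists i, (i < size s)%N /\ N (mul (inv (nth one s i)) x) &
        forall i j, (i < size s)%N -> (j < size s)%N ->
          N (mul (inv (nth one s i)) (nth one s j)) -> i = j].

Definition maximal_subgroup (H M : set T) :=
  [/\ subgroup M, M `<=` H, M <> H &
      forall L, subgroup L -> M `<=` L -> L `<=` H -> L = M \/ L = H].

(* Frattini subgroup of H: intersection of the maximal subgroups of H
   (equal to H if H has no maximal subgroup) *)
Definition frattini (H : set T) : set T :=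
  [set x | H x /\ forall M, maximal_subgroup H M -> M x].

(* (T, K, H) is hierarchical: x in T, x^p in H  ==>  x in K *)
Definition hierarchical (p : nat) (K H : set T) :=
  forall x, H (gpow x p) -> K x.

End GroupNotions.

Record proPGroup (p : nat) := ProPGroup {
  pg_car :> topologicalType;
  pg_mul : pg_car -> pg_car -> pg_car;
  pg_one : pg_car;
  pg_inv : pg_car -> pg_car;
  pg_group : group_axioms pg_mul pg_one pg_inv;
  pg_mul_cont : continuous (fun xy : pg_car * pg_car => pg_mul xy.1 xy.2);
  pg_inv_cont : continuous pg_inv;
  pg_compact : compact [set: pg_car];
  pg_hausdorff : hausdorff_space pg_car;
  pg_tdisc : totally_disconnected [set: pg_car];
  pg_ppower : forall N, open_normal_subgroup pg_mul pg_one pg_inv N ->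
                        ppower_index pg_mul pg_one pg_inv p N
}.

Section ProP.
Variable p : nat.

Definition pSubgroup (G : proPGroup p) := subgroup (@pg_mul p G) (@pg_one p G) (@pg_inv p G).
Definition pOpenSubgroup (G : proPGroup p) :=
  open_subgroup (@pg_mul p G) (@pg_one p G) (@pg_inv p G).
Definition pMaximal (G : proPGroup p) := maximal_subgroup (@pg_mul p G) (@pg_one p G) (@pg_inv p G).
Definition pFrattini (G : proPGroup p) := frattini (@pg_mul p G) (@pg_one p G) (@pg_inv p G).
Definition pHierarchical (G : proPGroup p) :=
  hierarchical (@pg_mul p G) (@pg_one p G) p.

(* phi : U -> K (U a subgroup of G) is a Frattini-cover: a continuous
   epimorphism of pro-p groups whose kernel lies in Phi(U).
   phi is given as a function on G; only its values on U matter. *)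
Definition frattini_cover (G K : proPGroup p) (U : set G) (phi : G -> K) :=
  [/\ {within U, continuous phi},
      forall x y, U x -> U y -> phi (pg_mul x y) = pg_mul (phi x) (phi y),
      forall k : K, exists2 x, U x & phi x = k &
      forall x, U x -> phi x = @pg_one p K -> pFrattini U x].

Definition strongly_frattini_resistant (G : proPGroup p) :=
  forall H : set G, pSubgroup H -> pHierarchical H (pFrattini H).

End ProP.

From HB Require Import structures.
From mathcomp Require Import all_boot all_order.
From mathcomp Require Import all_classical all_reals all_analysis.
From mathcomp Require Import all_fingroup all_solvable finmap.
Set Implicit Arguments. Unset Strict Implicit. Unset Printing Implicit Defensive.
Local Open Scope classical_set_scope.

(** Suppose [x ^+ p] lies in the Frattini subgroup of a closed subgroup [H]
    but [x] does not lie in [H]. Since a compact totally disconnected group is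
    zero-dimensional, there is an open normal [N] with [x \notin H N]; in the
    finite [p]-group [G / N], a maximal subgroup of [<x, H N / N>] containing
    [H N / N] misses [x N]. Its preimage [M] is an open subgroup containing
    [H] and maximal in the preimage [U] of [<x, H N / N>]. Maximal subgroups
    of an open subgroup [V] are open and normal in [V] (they contain an open
    normal subgroup of [G], and maximal subgroups of finite [p]-groups are
    normal), so they meet each closed subgroup of [V] in itself or in a
    maximal subgroup of it; hence [Phi(H) <= Phi(M)]. Finally a Frattini cover
    [f : U -> K] has kernel inside [M], maps [M] onto a maximal subgroup of
    [K] and [Phi(M)] into [Phi(f M)], so the hierarchical triple [(K, f M,
    Phi(f M))] gives [f x \in f M], i.e. [x \in M], a contradiction. *)

Section quasicomponent.
Context {T : topologicalType}.

Definition quasicomponent (x : T) := \bigcap_(C in [set C | clopen C /\ C x]) C.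

Lemma quasicomponent_refl (x : T) : quasicomponent x x.
Proof. by move=> C []. Qed.

Lemma closed_quasicomponent (x : T) : closed (quasicomponent x).
Proof. by apply: closed_bigI => C [[]]. Qed.

Hypotheses (hT : hausdorff_space T) (cT : compact [set: T]).

Lemma compact_separate_closed (A B : set T) : closed A -> closed B ->
  A `&` B = set0 ->
  exists U V : set T, [/\ open U, open V, A `<=` U, B `<=` V & U `&` V = set0].
Proof.
move=> clA clB AB0.
have nbhsAB : set_nbhs A (~` B).
  apply/set_nbhsP; exists (~` B); split => //; first exact: closed_openC.
  by move=> a Aa Ba; have : (A `&` B) a by []; rewrite AB0.
have [V nbhsAV clVB] := compact_normal hT cT clA nbhsAB.
have /set_nbhsP [W [oW AW WV]] := nbhsAV.
exists W, (~` closure V); split => //.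
- exact/closed_openC/closed_closure.
- by move=> b Bb /clVB.
- by apply/seteqP; split => // w [/WV /subset_closure].
Qed.

Lemma clopen_sub_open_quasicomponent (x : T) (W : set T) : open W ->
  quasicomponent x `<=` W -> exists C, [/\ clopen C, C x & C `<=` W].
Proof.
move=> oW QW; apply: contrapT => noC.
pose F := filter_from [set C | clopen C /\ C x] (fun C => C `&` ~` W).
have FF : Filter F.
  apply: filter_from_filter; first by exists setT; split => //; exact: clopenT.
  move=> C1 C2 [? ?] [? ?]; exists (C1 `&` C2); first by split => //; exact: clopenI.
  by move=> z [[? ?] ?].
have PF : ProperFilter F.
  apply: filter_from_proper => C [clC Cx]; apply: contrapT => CW0.
  apply: noC; exists C; split => // z Cz; apply: contrapT => Wz; apply: CW0.
  by exists z.
have cW : compact (~` W) by apply: (subclosed_compact _ cT) => //; exact: open_closedC.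
have FW : F (~` W) by exists setT; [split => //; exact: clopenT | move=> z []].
have [z [nWz Fz]] := cW F PF FW.
apply/nWz/QW => C [clopC Cx].
rewrite (closure_id C).1; last by case: clopC.
apply: (closureS (@subIsetl _ C (~` W))).
by move=> B nB; have := Fz (C `&` ~` W) B; apply => //; exists C.
Qed.

(** Some clopen neighbourhood [C] of [x] lies in the union of open sets
    separating [A1] from [A2], and [quasicomponent x] is inside [C] meet the
    one around [A1]. *)
Lemma quasicomponent_sub_closed (x : T) (A1 A2 : set T) : closed A1 -> closed A2 ->
  A1 `&` A2 = set0 -> quasicomponent x `<=` A1 `|` A2 -> A1 x ->
  quasicomponent x `<=` A1.
Proof.
move=> cl1 cl2 A12 QA A1x.
have [U1 [U2 [ o1 o2 AU1 AU2 U12]]] := compact_separate_closed cl1 cl2 A12.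
have [C [ [oC clC] Cx CU]] : exists C, [/\ clopen C, C x & C `<=` U1 `|` U2].
  apply: clopen_sub_open_quasicomponent; first exact: openU.
  by move=> z /QA [/AU1|/AU2]; [left|right].
have CU1E : C `&` U1 = C `&` ~` U2.
  apply/seteqP; split => w [Cw Uw]; split => //.
    by move=> U2w; have : (U1 `&` U2) w by []; rewrite U12.
  by case: (CU w Cw).
have clCU1 : clopen (C `&` U1).
  by split; [exact: openI | rewrite CU1E; apply: closedI => //; exact: open_closedC].
move=> z Qz; case: (QA z Qz) => // A2z.
have [_ U1z] : (C `&` U1) z by apply: Qz; split => //; split => //; exact: AU1.
have : (U1 `&` U2) z by split => //; exact: AU2.
by rewrite U12.
Qed.

Lemma connected_quasicomponent (x : T) : connected (quasicomponent x).
Proof.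
move=> B [b Bb] [ O oO BO] [ F clF BF].
have clQF : closed (quasicomponent x `&` F).
  by apply: closedI => //; exact: closed_quasicomponent.
have clQO : closed (quasicomponent x `&` ~` O).
  by apply: closedI; [exact: closed_quasicomponent | exact: open_closedC].
have disj : (quasicomponent x `&` F) `&` (quasicomponent x `&` ~` O) = set0.
  apply/seteqP; split => // w [[Qw Fw] [_ nOw]].
  have : B w by rewrite BF.
  by rewrite BO => -[].
have cover :
    quasicomponent x `<=` (quasicomponent x `&` F) `|` (quasicomponent x `&` ~` O).
  by move=> w Qw; have [Ow|] := pselect (O w); [left; rewrite -BF BO | right].
have [Bx|nBx] := pselect (B x).
  apply/seteqP; split; first by rewrite BO; exact: subIsetl.
  have QFx : (quasicomponent x `&` F) x by rewrite -BF.
  by rewrite BF; exact: quasicomponent_sub_closed clQF clQO disj cover QFx.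
have QOx : (quasicomponent x `&` ~` O) x.
  split; first exact: quasicomponent_refl.
  by move=> Ox; apply: nBx; rewrite BO; split => //; exact: quasicomponent_refl.
have cover' :
    quasicomponent x `<=` (quasicomponent x `&` ~` O) `|` (quasicomponent x `&` F).
  by move=> w /cover [] ?; [right | left].
have disj' : (quasicomponent x `&` ~` O) `&` (quasicomponent x `&` F) = set0.
  by rewrite setIC.
have QO := quasicomponent_sub_closed clQO clQF disj' cover' QOx.
have [Qb Ob] : (quasicomponent x `&` O) b by rewrite -BO.
by have [_] := QO b Qb.
Qed.

Lemma totally_disconnected_zero_dimensional :
  totally_disconnected [set: T] -> zero_dimensional T.
Proof.
move=> tdT x y xy; apply: contrapT => nsep.
have Qy : quasicomponent x y.
  by move=> C [clC Cx]; apply: contrapT => nCy; apply: nsep; exists C.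
have := connected_component_max (@quasicomponent_refl x) (@subsetT _ _)
  (@connected_quasicomponent x) Qy.
by rewrite tdT // => yx; move: xy; rewrite yx eqxx.
Qed.

End quasicomponent.

Section pro_p_group.
Variables (p : nat) (G : proPGroup p).

Definition gtype : Type := pg_car G.
HB.instance Definition _ := Choice.on gtype.

Let pg_axioms := pg_group G.
Let pg_mulA : associative (@pg_mul p G). Proof. by case: pg_axioms. Qed.
Let pg_mul1g : left_id (@pg_one p G) (@pg_mul p G). Proof. by case: pg_axioms. Qed.
Let pg_mulg1 : right_id (@pg_one p G) (@pg_mul p G). Proof. by case: pg_axioms. Qed.
Let pg_mulVg : left_inverse (@pg_one p G) (@pg_inv p G) (@pg_mul p G).
Proof. by case: pg_axioms. Qed.
Let pg_mulgV : right_inverse (@pg_one p G) (@pg_inv p G) (@pg_mul p G).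
Proof. by case: pg_axioms. Qed.

HB.instance Definition _ := isGroup.Build gtype pg_mulA pg_mul1g pg_mulg1 pg_mulVg pg_mulgV.
HB.instance Definition _ := Topological.on gtype.
(* [compact_cover] is stated for pointed spaces. *)
HB.instance Definition _ := isPointed.Build gtype (pg_one G).

Local Open Scope group_scope.

Lemma gpowE (x : gtype) n : gpow (@pg_mul p G) (@pg_one p G) x n = x ^+ n.
Proof. exact: (iter_mulg_1 n x). Qed.

End pro_p_group.

Local Notation abs_subgroupG G A :=
  (@abs_subgroup _ (@mul (gtype G)) 1%g (@inv (gtype G)) A).
Local Notation subgroupG G A :=
  (@subgroup _ (@mul (gtype G)) 1%g (@inv (gtype G)) A).
Local Notation normalG G N :=
  (@normal_set _ (@mul (gtype G)) (@inv (gtype G)) N).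
Local Notation maximalG G H M :=
  (@maximal_subgroup _ (@mul (gtype G)) 1%g (@inv (gtype G)) H M).
Local Notation frattiniG G H :=
  (@frattini _ (@mul (gtype G)) 1%g (@inv (gtype G)) H).

Section topological_group.
Variables (p : nat) (G : proPGroup p).
Local Open Scope group_scope.

Lemma continuous_mull (a : gtype G) : continuous (fun x : gtype G => a * x).
Proof.
move=> x; apply: (continuous_comp (f := fun y : gtype G => (a, y))
  (g := fun xy : gtype G * gtype G => pg_mul xy.1 xy.2)); last exact: pg_mul_cont.
by apply: cvg_pair; [exact: cvg_cst | exact: cvg_id].
Qed.

Lemma continuous_mulr (a : gtype G) : continuous (fun x : gtype G => x * a).
Proof.
move=> x; apply: (continuous_comp (f := fun y : gtype G => (y, a))
  (g := fun xy : gtype G * gtype G => pg_mul xy.1 xy.2)); last exact: pg_mul_cont.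
by apply: cvg_pair; [exact: cvg_id | exact: cvg_cst].
Qed.

Lemma continuous_invg : continuous (fun x : gtype G => x^-1).
Proof. exact: pg_inv_cont. Qed.

Lemma continuous_conjg (g : gtype G) : continuous (fun y : gtype G => y ^ g).
Proof.
move=> y; apply: (continuous_comp (f := fun y : gtype G => y * g)
  (g := fun z : gtype G => g^-1 * z)); [exact: continuous_mulr | exact: continuous_mull].
Qed.

Lemma nbhs1_translate (A : set (gtype G)) (v : gtype G) :
  nbhs (1 : gtype G) A -> nbhs v [set y | A (v^-1 * y)].
Proof. by have := @continuous_mull v^-1 v; rewrite /continuous_at mulVg; apply. Qed.

Lemma open_abs_subgroup (A : set (gtype G)) :
  abs_subgroupG G A -> nbhs (1 : gtype G) A -> open A.
Proof.
case=> _ AM _ nA; rewrite openE => v Av.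
apply: filterS (nbhs1_translate v nA) => y /= Ay.
by rewrite -(mulKVg v y); exact: AM.
Qed.

Lemma open_abs_subgroup_closed (A : set (gtype G)) :
  abs_subgroupG G A -> open A -> closed A.
Proof.
case=> A1 AM AV oA; rewrite -openC openE => y nAy.
have nA : nbhs (1 : gtype G) A by exact: open_nbhs_nbhs.
apply: filterS (nbhs1_translate y nA) => x /= Ax Ay; apply: nAy.
by rewrite -[y](mulKVg x) -[x^-1 * y]invgK; apply: AM => //; apply: AV; rewrite invgM invgK.
Qed.

Definition setmulg (A B : set (gtype G)) : set (gtype G) :=
  [set g | exists2 a, A a & B (a^-1 * g)].

Lemma abs_subgroup_setmulg (A B : set (gtype G)) : abs_subgroupG G A -> abs_subgroupG G B ->
  (forall a b, A a -> B b -> B (a^-1 * b * a)) -> abs_subgroupG G (setmulg A B).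
Proof.
move=> [A1 AM AV] [B1 BM BV] nBA; split.
- by exists 1 => //; rewrite invg1 mul1g.
- move=> g1 g2 [a1 Aa1 Bg1] [a2 Aa2 Bg2]; exists (a1 * a2); first exact: AM.
  have -> : (a1 * a2)^-1 * (g1 * g2) = a2^-1 * (a1^-1 * g1) * a2 * (a2^-1 * g2).
    by rewrite invgM !mulgA mulgK.
  by apply: BM => //; exact: nBA.
- move=> g [a Aa Bg]; exists a^-1; first exact: AV.
  have -> : a^-1^-1 * g^-1 = (a^-1^-1 * (a^-1 * g) * a^-1)^-1.
    by rewrite !invgK !invgM !invgK !mulgA mulgK.
  by apply/BV/nBA => //; exact: AV.
Qed.

Lemma open_setmulg (A B : set (gtype G)) : open B -> open (setmulg A B).
Proof.
move=> oB; rewrite openE => g [a Aa Bg].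
have nBg : nbhs (a^-1 * g) B by exact: open_nbhs_nbhs.
have : nbhs g [set y | B (a^-1 * y)] by exact: continuous_mull.
by apply: filterS => y By; exists a.
Qed.

Lemma setmulg_subl (A B : set (gtype G)) : B 1 -> A `<=` setmulg A B.
Proof. by move=> B1 a Aa; exists a; rewrite ?mulVg. Qed.

Lemma setmulg_subr (A B : set (gtype G)) : A 1 -> B `<=` setmulg A B.
Proof. by move=> A1 b Bb; exists 1; rewrite ?invg1 ?mul1g. Qed.

Lemma setmulg_sub (A B V : set (gtype G)) : abs_subgroupG G V -> A `<=` V -> B `<=` V ->
  setmulg A B `<=` V.
Proof. by case=> _ VM _ AV BV g [a /AV Va /BV]; rewrite -{2}(mulKVg a g); exact: VM. Qed.

(** The uniformity over [C] comes from compactness of [C]. *)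
Lemma nbhs1_clopen_stabilizer (C : set (gtype G)) :
  clopen C -> nbhs (1 : gtype G) [set b | forall a, C a -> C (a * b)].
Proof.
case=> oC clC.
have cpC : compact C by apply: subclosed_compact clC (@pg_compact p G) _.
have := (compact_near_coveringP C).1 cpC (gtype G) (nbhs (1 : gtype G))
  (fun b a => C (a * b)) _.
apply => // c Cc.
have := @pg_mul_cont p G (c, 1 : gtype G); rewrite /continuous_at /=.
by apply; apply: open_nbhs_nbhs; split => //; change (C (c * 1)); rewrite mulg1.
Qed.

(** The [b] with [C * b = C] form a subgroup, contained in [C] as [C 1]. *)
Lemma open_subgroup_sub_clopen (C : set (gtype G)) : clopen C -> C 1 ->
  exists V : set (gtype G), [/\ abs_subgroupG G V, open V & V `<=` C].
Proof.
move=> clC C1.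
pose S := [set b : gtype G | forall a, C a -> C (a * b)].
have SM b b' : S b -> S b' -> S (b * b') by move=> Sb Sb' a /Sb /Sb'; rewrite mulgA.
pose V := [set b : gtype G | S b /\ S b^-1].
have aV : abs_subgroupG G V.
  split; first by split => a; rewrite ?invg1 mulg1.
  - by move=> b b' [Sb Sb'] [Sb1 Sb1']; split; rewrite ?invgM; exact: SM.
  - by move=> b [Sb Sb']; split; rewrite ?invgK.
exists V; split => //; last by move=> b [/(_ 1 C1)]; rewrite mul1g.
apply: open_abs_subgroup => //; apply: filterI; first exact: nbhs1_clopen_stabilizer.
have := @continuous_invg 1; rewrite /continuous_at invg1; apply.
exact: nbhs1_clopen_stabilizer.
Qed.

Lemma abs_subgroupJ (V : set (gtype G)) x v : abs_subgroupG G V -> V x -> V v -> V (x ^ v).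
Proof. by case=> _ VM VV Vx Vv; apply: (VM); [exact: VV | exact: VM]. Qed.

(** The finitely many conjugates [V ^ g], for [g] running over representatives
    of a finite cover of [G] by cosets of [V], intersect in a normal subgroup. *)
Lemma open_normal_core (V : set (gtype G)) : abs_subgroupG G V -> open V ->
  exists N : set (gtype G), [/\ abs_subgroupG G N, open N, normalG G N & N `<=` V].
Proof.
move=> aV oV; have [V1 VM VV] := aV.
have cpG : compact [set: gtype G] := @pg_compact p G.
rewrite compact_cover in cpG.
have [D _ cover] := cpG (gtype G) setT
  (fun g => [set y : gtype G | V (g^-1 * y)])
  (fun g _ => open_comp (fun y _ => @continuous_mull g^-1 y) oV)
  (fun y _ => ex_intro2 _ _ y I (eq_ind _ V V1 _ (esym (mulVg y)))).
pose N := \bigcap_(g in [set` D]) [set y : gtype G | V (y ^ g)].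
have aN : abs_subgroupG G N.
  split; first by move=> g _ /=; rewrite conj1g.
  - by move=> x y Nx Ny g Dg /=; rewrite conjMg; apply: VM; [exact: Nx | exact: Ny].
  - by move=> x Nx g Dg /=; rewrite conjVg; apply: VV; exact: Nx.
exists N; split => //.
- apply: open_abs_subgroup => //; apply: filter_bigI => g _.
  have := @continuous_conjg g 1; rewrite /continuous_at conj1g; apply.
  exact: open_nbhs_nbhs.
- move=> h x Nx g Dg /=; have [g' Dg' /= Vg'h] := cover (h * g) I.
  have -> : (h^-1 * x * h) ^ g = (x ^ g') ^ (g'^-1 * (h * g)).
    by rewrite -conjgM mulKVg conjgM /conjg !mulgA.
  by apply: (abs_subgroupJ aV) Vg'h; exact: Nx.
- have [g Dg /= Vg] := cover 1 I; rewrite mulg1 in Vg.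
  move=> x Nx; rewrite -(conjgK g x).
  by apply: (abs_subgroupJ aV) Vg; exact: Nx.
Qed.

Lemma open_normal_nbhs1 (W : set (gtype G)) : open W -> W 1 ->
  exists N : set (gtype G), [/\ abs_subgroupG G N, open N, normalG G N & N `<=` W].
Proof.
move=> oW W1.
have zdG : zero_dimensional (gtype G).
  apply: totally_disconnected_zero_dimensional;
    [exact: @pg_hausdorff p G | exact: @pg_compact p G | exact: @pg_tdisc p G].
have := @zero_dimensional_cvg (gtype G) 1 (@pg_hausdorff p G) zdG (@pg_compact p G).
case/(_ W); first exact: open_nbhs_nbhs.
move=> C [C1 clC] CW.
have [V [aV oV VC]] := open_subgroup_sub_clopen clC C1.
have [N [aN oN nN NV]] := open_normal_core aV oV.
by exists N; split => // y /NV /VC /CW.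
Qed.

Lemma open_normal_separate (H O : set (gtype G)) (x : gtype G) : closed H -> ~ H x ->
  open O -> O 1 ->
  exists N : set (gtype G), [/\ abs_subgroupG G N, open N, normalG G N, N `<=` O &
    ~ setmulg H N x].
Proof.
move=> clH Hx oO O1.
pose W := O `&` ~` [set n : gtype G | H (x * n^-1)].
have oW : open W.
  apply: openI => //; apply: closed_openC.
  apply: (@preimage_closed _ _ (fun n : gtype G => x * n^-1)) => // n _.
  apply: (continuous_comp (f := fun y : gtype G => y^-1) (g := fun z => x * z)).
    exact: continuous_invg.
  exact: continuous_mull.
have W1 : W 1 by split => //=; rewrite invg1 mulg1.
have [N [aN oN nN NW]] := open_normal_nbhs1 oW W1.
exists N; split => //; first by move=> y /NW [].
case=> h Hh /NW [_]; apply => /=.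
by rewrite invgM invgK mulKVg.
Qed.

End topological_group.

(** The quotient of [G] by an open normal subgroup [N], realised on the index
    set of a list [s] of coset representatives. *)
Section finite_quotient.
Variables (p : nat) (G : proPGroup p) (N : set (gtype G)) (s : seq (gtype G)).
Hypotheses (aN : abs_subgroupG G N) (oN : open N) (nN : normalG G N).
Hypothesis s_cover : forall x, exists i, (i < size s)%N /\ N ((nth 1 s i)^-1 * x)%g.
Hypothesis s_uniq : forall i j, (i < size s)%N -> (j < size s)%N ->
  N ((nth 1 s i)^-1 * nth 1 s j)%g -> i = j.
Local Open Scope group_scope.

Let N1 : N 1. Proof. by case: aN. Qed.
Let NM x y : N x -> N y -> N (x * y). Proof. by case: aN => _ + _; apply. Qed.
Let NV x : N x -> N x^-1. Proof. by case: aN => _ _; apply. Qed.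
Let N_sym x y : N (x^-1 * y) -> N (y^-1 * x).
Proof. by move/NV; rewrite invgM invgK. Qed.

Definition quotient_type : Type := 'I_(size s).
HB.instance Definition _ := Finite.on quotient_type.

Definition coset_rep (i : quotient_type) : gtype G := nth 1 s i.

Lemma exists_coset (x : gtype G) : exists i : quotient_type, N ((coset_rep i)^-1 * x).
Proof. by have [i [lt_i Ni]] := s_cover x; exists (Ordinal lt_i). Qed.

Definition qproj (x : gtype G) : quotient_type := projT1 (cid (exists_coset x)).

Lemma qprojP x : N ((coset_rep (qproj x))^-1 * x).
Proof. exact: projT2 (cid (exists_coset x)). Qed.

Lemma qproj_eq x y : qproj x = qproj y <-> N (x^-1 * y).
Proof.
split=> [exy | Nxy].
  have := NM (NV (qprojP x)) (qprojP y); rewrite exy.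
  by rewrite invgM invgK mulgA mulgK.
apply: val_inj; apply: s_uniq; [exact: ltn_ord | exact: ltn_ord |].
have := NM (NM (qprojP x) Nxy) (NV (qprojP y)).
by rewrite invgM invgK !mulgA !mulgK.
Qed.

Lemma qproj_rep i : qproj (coset_rep i) = i.
Proof.
by apply: val_inj; apply: s_uniq; [exact: ltn_ord | exact: ltn_ord | exact: qprojP].
Qed.

Lemma qproj_mul_rep x y : qproj (x * y) = qproj (coset_rep (qproj x) * coset_rep (qproj y)).
Proof.
apply/qproj_eq.
have -> : (x * y)^-1 * (coset_rep (qproj x) * coset_rep (qproj y)) =
    y^-1 * (x^-1 * coset_rep (qproj x)) * y * (y^-1 * coset_rep (qproj y)).
  by rewrite invgM !mulgA mulgK.
by apply: NM; [apply: nN | ]; apply: N_sym; exact: qprojP.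
Qed.

Definition qmul (i j : quotient_type) := qproj (coset_rep i * coset_rep j).
Definition qone := qproj 1.
Definition qinv (i : quotient_type) := qproj (coset_rep i)^-1.

Lemma qmul_proj x y : qmul (qproj x) (qproj y) = qproj (x * y).
Proof. by rewrite [RHS]qproj_mul_rep. Qed.

Lemma qmulA : associative qmul.
Proof.
by move=> i j k; rewrite -[i]qproj_rep -[j]qproj_rep -[k]qproj_rep !qmul_proj mulgA.
Qed.

Lemma qmul1 : left_id qone qmul.
Proof. by move=> i; rewrite -[i]qproj_rep qmul_proj mul1g. Qed.

Lemma qmulV : left_inverse qone qinv qmul.
Proof. by move=> i; rewrite -{2}[i]qproj_rep qmul_proj mulVg. Qed.

HB.instance Definition _ := Finite_isGroup.Build quotient_type qmulA qmul1 qmulV.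

Lemma qprojM x y : qproj (x * y) = (qproj x * qproj y)%g.
Proof. by rewrite -qmul_proj. Qed.

Lemma qproj1 : qproj 1 = 1%g.
Proof. by []. Qed.

Lemma qprojV x : qproj x^-1 = (qproj x)^-1%g.
Proof. by apply: (mulgI (qproj x)); rewrite -qprojM !mulgV. Qed.

Lemma pgroup_quotient n : size s = (p ^ n)%N -> prime p ->
  p.-group [set: quotient_type]%SET.
Proof. by move=> s_n p_pr; rewrite /pgroup cardsT card_ord s_n pnatX pnat_id // orbT. Qed.

Definition qpre (B : {set quotient_type}) : set (gtype G) := [set g | qproj g \in B].
Definition qimg (A : set (gtype G)) : {set quotient_type} :=
  [set i | `[< exists2 a, A a & qproj a = i >]]%SET.

Lemma mem_qimg (A : set (gtype G)) a : A a -> qproj a \in qimg A.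
Proof. by move=> Aa; rewrite inE; apply/asboolP; exists a. Qed.

Lemma qimgP (A : set (gtype G)) i : i \in qimg A -> exists2 a, A a & qproj a = i.
Proof. by rewrite inE => /asboolP. Qed.

Lemma subgroup_qpre (B : {group quotient_type}) : subgroupG G (qpre B) /\ open (qpre B).
Proof.
have aB : abs_subgroupG G (qpre B).
  split; rewrite /qpre /= ?qproj1 ?group1 // => x y; rewrite ?qprojM ?qprojV.
    exact: groupM.
  by rewrite groupV.
suff oB : open (qpre B) by split => //; split => //; exact: open_abs_subgroup_closed.
rewrite openE => g Bg.
have : nbhs g [set y | N (g^-1 * y)] by apply/nbhs1_translate/open_nbhs_nbhs.
by apply: filterS => y /qproj_eq; rewrite /qpre /= => <-.
Qed.

Lemma sub_qpre (B : {group quotient_type}) : N `<=` qpre B.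
Proof.
move=> m Nm; rewrite /qpre /=.
have -> : qproj m = qproj 1 by apply/qproj_eq; rewrite mulg1; exact: NV.
by rewrite qproj1 group1.
Qed.

Lemma group_set_qimg (A : set (gtype G)) : abs_subgroupG G A -> group_set (qimg A).
Proof.
case=> A1 AM _; apply/group_setP; split; first by rewrite -qproj1; exact: mem_qimg.
move=> i j /qimgP [a Aa <-] /qimgP [b Bb <-]; rewrite -qprojM.
by apply: mem_qimg; exact: AM.
Qed.

Lemma qimgK (A : set (gtype G)) : abs_subgroupG G A -> N `<=` A -> qpre (qimg A) = A.
Proof.
case=> _ AM _ NA; apply/seteqP; split => g; last exact: mem_qimg.
move=> /qimgP [a Aa /qproj_eq Nag].
by rewrite -(mulKVg a g); apply: AM => //; exact: NA.
Qed.

Lemma qpreK (B : {set quotient_type}) : qimg (qpre B) = B.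
Proof.
apply/setP => i; apply/idP/idP; first by case/qimgP => a Ba <-.
by move=> Bi; rewrite -(qproj_rep i); apply: mem_qimg; rewrite /qpre /= qproj_rep.
Qed.

Lemma qimgS (A B : set (gtype G)) : A `<=` B -> qimg A \subset qimg B.
Proof. by move=> AB; apply/fintype.subsetP => i /qimgP [a /AB Ba <-]; exact: mem_qimg. Qed.

Lemma qpreS (A B : {set quotient_type}) : A \subset B -> qpre A `<=` qpre B.
Proof. by move=> /fintype.subsetP AB g /AB. Qed.

Lemma maximal_qimg (V R : set (gtype G)) : abs_subgroupG G V -> N `<=` R ->
  maximalG G V R -> maximal (qimg R) (qimg V).
Proof.
move=> aV NR [[aR _] RV neRV maxR].
pose RB := Group (group_set_qimg aR); pose VB := Group (group_set_qimg aV).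
have NsubV : N `<=` V by move=> m /NR /RV.
suff : maximal RB VB by [].
apply/maxgroupP; split.
  rewrite properE qimgS //=; apply/negP => /qpreS; rewrite !qimgK // => VR.
  by apply: neRV; apply/seteqP.
move=> LB /andP [LV neLV] RL.
have RL' : R `<=` qpre LB.
  by move=> r Rr; rewrite /qpre /=; apply: (fintype.subsetP RL); exact: mem_qimg.
have LV' : qpre LB `<=` V by rewrite -(qimgK aV NsubV); exact: qpreS.
have [eLR | eLV] := maxR _ (subgroup_qpre LB).1 RL' LV'.
  by rewrite /= -eLR qpreK.
by case/negP: neLV; rewrite /= -(qpreK LB) eLV.
Qed.

Lemma maximal_qpre (MB UB : {group quotient_type}) :
  maximal MB UB -> maximalG G (qpre UB) (qpre MB).
Proof.
move=> maxMU; have [/andP [MU neUM] _] := maxgroupP maxMU.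
split; [exact: (subgroup_qpre MB).1 | exact: qpreS | |].
  by move=> eMU; case/negP: neUM; rewrite -(qpreK UB) -eMU qpreK.
move=> L [aL _] ML LU.
have NL : N `<=` L by move=> m /(sub_qpre MB) /ML.
pose LB := Group (group_set_qimg aL).
have MLB : MB \subset LB by rewrite -(qpreK MB); exact: qimgS.
have LUB : LB \subset UB by rewrite -(qpreK UB); exact: qimgS.
have /maximal_eqP [_ /(_ LB MLB LUB) [eL | eL]] : maximal_eq MB UB.
  by rewrite /maximal_eq maxMU orbT.
- by left; rewrite -(qimgK aL NL) -[qimg L]/(gval LB) eL.
- by right; rewrite -(qimgK aL NL) -[qimg L]/(gval LB) eL.
Qed.

Lemma maximal_subgroup_normal n (V R : set (gtype G)) : prime p -> size s = (p ^ n)%N ->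
  abs_subgroupG G V -> N `<=` R -> maximalG G V R ->
  forall v r, V v -> R r -> R (r ^ v).
Proof.
move=> p_pr s_n aV NR maxR v r Vv Rr.
have [[aR _] _ _ _] := maxR.
pose VB := Group (group_set_qimg aV); pose RB := Group (group_set_qimg aR).
have pV : p.-group VB := pgroupS (finset.subsetT VB) (pgroup_quotient s_n p_pr).
have [_ nRV] := andP (p_maximal_normal pV (maximal_qimg aV NR maxR : maximal RB VB)).
rewrite -(qimgK aR NR) /qpre /= /conjg !qprojM qprojV -/(conjg _ _) memJ_norm.
  exact: mem_qimg.
exact: fintype.subsetP nRV _ (mem_qimg Vv).
Qed.

(** In [G / N] take a maximal subgroup of [<x, H N / N>] containing [H N / N]. *)
Lemma exists_maximal_separating (H : set (gtype G)) (x : gtype G) :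
  abs_subgroupG G H -> ~ setmulg H N x ->
  exists U M : set (gtype G), [/\ subgroupG G U /\ open U, open M, maximalG G U M,
    H `<=` M & U x /\ ~ M x].
Proof.
move=> aH HNx; pose HB := Group (group_set_qimg aH).
have xHB : qproj x \notin HB.
  by apply/negP => /qimgP [h Hh /qproj_eq Nhx]; apply: HNx; exists h.
pose UB := <<qproj x |: (HB : {set quotient_type})>>%G.
have HUB : HB \subset UB := fintype.subset_trans (finset.subsetUr _ _) (subset_gen _).
have [eHU | [MB maxMB HMB]] := maximal_exists HUB.
  by case/negP: xHB; rewrite eHU mem_gen // finset.setU11.
have xMB : qproj x \notin MB.
  apply/negP => xMB; have [/andP [_ /negP nUM] _] := maxgroupP maxMB.
  by apply: nUM; rewrite gen_subG finset.subUset finset.sub1set xMB.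
exists (qpre UB), (qpre MB); split.
- exact: subgroup_qpre.
- exact: (subgroup_qpre MB).2.
- exact: maximal_qpre.
- by move=> h Hh; rewrite /qpre /=; apply: (fintype.subsetP HMB); exact: mem_qimg.
- split; first by rewrite /qpre /= mem_gen // finset.setU11.
  by rewrite /qpre /=; apply/negP.
Qed.

End finite_quotient.

Section maximal_subgroups.
Variables (p : nat) (G : proPGroup p).
Hypothesis p_pr : prime p.
Local Open Scope group_scope.

(** For [y] in [V] but not in [R], choose [N] open normal with [y \notin R N];
    maximality forces [R N = R], and [R / N] is maximal in the [p]-group [V / N]. *)
Lemma maximal_open_normal (V R : set (gtype G)) : abs_subgroupG G V -> open V ->
  maximalG G V R -> open R /\ forall v r, V v -> R r -> R (r ^ v).
Proof.
move=> aV oV maxR; have [[aR clR] RV neRV maxRV] := maxR.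
have [V1 _ _] := aV; have [R1 _ _] := aR.
have /nonsubset [y [Vy Ry]] : ~ V `<=` R by move=> VR; apply/neRV/seteqP.
have [N [aN oN nN NV RNy]] := open_normal_separate clR Ry oV V1.
have [N1 _ _] := aN.
have aRN : abs_subgroupG G (setmulg R N).
  by apply: abs_subgroup_setmulg => // a b _; apply: nN.
have oRN : open (setmulg R N) := open_setmulg R oN.
have [eR | eV] := maxRV _ (conj aRN (open_abs_subgroup_closed aRN oRN))
  (setmulg_subl (A := R) N1) (setmulg_sub aV RV NV).
  have NR : N `<=` R by rewrite -eR; exact: setmulg_subr.
  split; first by rewrite -eR.
  have clN := open_abs_subgroup_closed aN oN.
  have [n [s [s_n s_cover s_uniq]]] := pg_ppower (conj (conj (conj aN clN) oN) nN).
  exact: (maximal_subgroup_normal aN oN nN s_cover s_uniq p_pr s_n aV NR maxR).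
by case: RNy; rewrite eV.
Qed.

(** If [L] is not inside [R] then [L R = V], so each [h] of [H] is [l r] with
    [r] in [H :&: R]. *)
Lemma maximal_subgroupI (V R H : set (gtype G)) : abs_subgroupG G V -> open V ->
  maximalG G V R -> subgroupG G H -> H `<=` V -> ~ H `<=` R -> maximalG G H (H `&` R).
Proof.
move=> aV oV maxR [aH clH] HV HR.
have [oR nR] := maximal_open_normal aV oV maxR.
have [[aR clR] RV _ maxRV] := maxR.
have [R1 RM RI] := aR; have [H1 HM HI] := aH.
have aHR : abs_subgroupG G (H `&` R).
  by split => [| a b [? ?] [? ?] | a [? ?]]; split; auto.
split; [by split => //; exact: closedI | exact: subIsetl | |].
  by move=> eHR; apply: HR; rewrite -eHR; exact: subIsetr.
move=> L [aL clL] HRL LH.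
have [LR | ] := pselect (L `<=` R).
  by left; apply/seteqP; split => // l Ll; split; [exact: LH | exact: LR].
move=> /nonsubset [l [Ll Rl]]; have [L1 LM _] := aL.
have LV : L `<=` V by move=> z /LH /HV.
have aLR : abs_subgroupG G (setmulg L R).
  by apply: abs_subgroup_setmulg => // a b /LV Va Rb; rewrite -mulgA; exact: nR.
have [eR | eV] := maxRV _ (conj aLR (open_abs_subgroup_closed aLR (open_setmulg L oR)))
  (setmulg_subr (A := L) L1) (setmulg_sub aV LV RV).
  by case: Rl; rewrite -eR; exact: setmulg_subl.
right; apply/seteqP; split => // h Hh.
have [l' Ll' Rlh] : setmulg L R h by rewrite eV; exact: HV.
rewrite -(mulKVg l' h); apply: LM => //; apply: HRL; split => //.
by apply: HM; [apply: HI; exact: LH | ].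
Qed.

Lemma frattini_sub_open (H V : set (gtype G)) : subgroupG G H ->
  abs_subgroupG G V -> open V -> H `<=` V -> frattiniG G H `<=` frattiniG G V.
Proof.
move=> sH aV oV HV g [Hg PhiHg]; split=> [|R maxR]; first exact: HV.
have [HR | HR] := pselect (H `<=` R); first exact: HR.
by have [] := PhiHg _ (maximal_subgroupI aV oV maxR sH HV HR).
Qed.

End maximal_subgroups.

Lemma closed_setI_preimage (T S : topologicalType) (A : set T) (f : T -> S) (B : set S) :
  closed A -> {within A, continuous f} -> closed B -> closed (A `&` f @^-1` B).
Proof.
move=> clA cf clB z clz.
have Az : A z.
  by apply: clA => W nW; have [y [[Ay _] Wy]] := clz W nW; exists y.
split => //; apply: clB => W nW.
have nfW : within A (nbhs z) (f @^-1` W) by rewrite nbhs_subspace_in //; exact: cf.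
have [y [[Ay By] Wy]] := clz _ nfW.
by exists (f y); split => //; exact: Wy.
Qed.

Section frattini_cover.
Variables (p : nat) (G K : proPGroup p) (U : set (gtype G)) (f : gtype G -> gtype K).
Hypotheses (sU : subgroupG G U) (fc : frattini_cover U f).
Local Open Scope group_scope.

Let f_cont : {within U, continuous f}. Proof. by case: fc. Qed.
Let fM : forall x y, U x -> U y -> f (x * y) = f x * f y. Proof. by case: fc. Qed.
Let fS : forall k, exists2 x, U x & f x = k. Proof. by case: fc. Qed.
Let U1 : U 1. Proof. by case: sU => -[]. Qed.
Let UM : forall x y, U x -> U y -> U (x * y). Proof. by case: sU => -[]. Qed.
Let UV : forall x, U x -> U x^-1. Proof. by case: sU => -[]. Qed.

Lemma cover1 : f 1 = 1.
Proof. by apply: (mulgI (f 1)); rewrite -fM // !mulg1. Qed.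

Lemma coverV x : U x -> f x^-1 = (f x)^-1.
Proof. by move=> Ux; apply: (mulgI (f x)); rewrite -fM ?mulgV ?cover1 //; exact: UV. Qed.

Lemma coverX x n : U x -> f (x ^+ n) = f x ^+ n.
Proof.
move=> Ux; elim: n => [|n IHn]; first exact: cover1.
have UXn : U (x ^+ n) by elim: n {IHn} => [|n IHn]; rewrite ?expgS; auto.
by rewrite !expgS fM // IHn.
Qed.

Lemma cover_ker_maximal (M : set (gtype G)) u :
  maximalG G U M -> U u -> f u = 1 -> M u.
Proof. by move=> maxM Uu fu1; case: fc => _ _ _ /(_ u Uu fu1) [_]; apply. Qed.

Lemma cover_fiber (M : set (gtype G)) m u : maximalG G U M -> M m -> U u ->
  f m = f u -> M u.
Proof.
move=> maxM Mm Uu fmu; have [[[_ MM _] _] MU _ _] := maxM.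
have Um := MU _ Mm.
rewrite -(mulKVg m u); apply: MM => //; apply: cover_ker_maximal maxM _ _.
  exact: UM (UV Um) Uu.
by rewrite fM ?coverV ?fmu ?mulVg //; exact: UV.
Qed.

Lemma subgroup_cover_image (A : set (gtype G)) : subgroupG G A -> A `<=` U ->
  subgroupG K (f @` A).
Proof.
move=> [[A1 AM AV] clA] AU; split; first split.
- by exists 1 => //; exact: cover1.
- move=> _ _ [a Aa <-] [b Ab <-]; exists (a * b); first exact: AM.
  by rewrite fM //; exact: AU.
- by move=> _ [a Aa <-]; exists a^-1; [exact: AV | rewrite coverV //; exact: AU].
apply: compact_closed; first exact: @pg_hausdorff p K.
apply: continuous_compact; first exact: continuous_subspaceW AU f_cont.
exact: subclosed_compact clA (@pg_compact p G) _.
Qed.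

Lemma subgroup_cover_preimage (A : set (gtype G)) (B : set (gtype K)) :
  subgroupG G A -> A `<=` U -> subgroupG K B -> subgroupG G (A `&` f @^-1` B).
Proof.
move=> [[A1 AM AV] clA] AU [[B1 BM BV] clB]; split; first split.
- by split => //=; rewrite cover1.
- move=> a b [Aa Ba] [Ab Bb]; split; first exact: AM.
  by rewrite /= fM; [exact: BM | exact: AU | exact: AU].
- by move=> a [Aa Ba]; split; [exact: AV | rewrite /= coverV; [exact: BV | exact: AU]].
exact: closed_setI_preimage clA (continuous_subspaceW AU f_cont) clB.
Qed.

Lemma maximal_cover_preimage (A : set (gtype G)) (R : set (gtype K)) :
  subgroupG G A -> A `<=` U -> maximalG K (f @` A) R -> maximalG G A (A `&` f @^-1` R).
Proof.
move=> sA AU [sR RA neRA maxR]; have [[R1 _ _] _] := sR.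
split; [exact: subgroup_cover_preimage | exact: subIsetl | |].
  move=> eA; apply/neRA/seteqP; split => // _ [a Aa <-].
  by have [] : (A `&` f @^-1` R) a by rewrite eA.
move=> L sL ARL LA; have [[_ LM LV] _] := sL.
have RL : R `<=` f @` L.
  by move=> r /[dup] /RA [a Aa <-] Rfa; exists a => //; exact: ARL.
have fLA : f @` L `<=` f @` A by move=> _ [l Ll <-]; exists l => //; exact: LA.
have [eR | eA] := maxR _ (subgroup_cover_image sL (subset_trans LA AU)) RL fLA.
  left; apply/seteqP; split => // l Ll; split; first exact: LA.
  by rewrite /= -eR; exists l.
right; apply/seteqP; split => // a Aa.
have [l Ll fla] : (f @` L) (f a) by rewrite eA; exists a.
have Ul := AU _ (LA _ Ll); have Ua := AU _ Aa.
rewrite -(mulKVg l a); apply: LM => //; apply: ARL; split.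
  by case: sA => -[_ AM AV] _; apply: AM => //; apply: AV; exact: LA.
by rewrite /= fM ?coverV ?fla ?mulVg //; exact: UV.
Qed.

Lemma frattini_cover_image (A : set (gtype G)) a : subgroupG G A -> A `<=` U ->
  frattiniG G A a -> frattiniG K (f @` A) (f a).
Proof.
move=> sA AU [Aa PhiAa]; split=> [|R maxR]; first by exists a.
by have [] := PhiAa _ (maximal_cover_preimage sA AU maxR).
Qed.

Lemma maximal_cover_image (M : set (gtype G)) :
  maximalG G U M -> maximalG K [set: gtype K] (f @` M).
Proof.
move=> maxM; have [sM MU neMU maxMU] := maxM.
split; [exact: subgroup_cover_image | by [] | |].
  move=> eM; have /nonsubset [u [Uu Mu]] : ~ U `<=` M by move=> UM'; apply/neMU/seteqP.
  have [m Mm fmu] : (f @` M) (f u) by rewrite eM.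
  exact/Mu/(cover_fiber maxM Mm Uu fmu).
move=> L sL ML _.
have [eM | eU] := maxMU _ (subgroup_cover_preimage sU (@subset_refl _ U) sL)
  (fun m Mm => conj (MU _ Mm) (ML _ (ex_intro2 _ _ m Mm erefl))) (@subIsetl _ _ _).
  left; apply/seteqP; split => // k Lk; have [u Uu fuk] := fS k.
  by exists u => //; rewrite -eM; split; rewrite /= ?fuk.
right; apply/seteqP; split => // k _; have [u Uu <-] := fS k.
by have [] : (U `&` f @^-1` L) u by rewrite eU.
Qed.

Lemma frattini_cover_hierarchical (M : set (gtype G)) x :
  (forall Mk : set K, pMaximal [set: K] Mk -> pHierarchical Mk (pFrattini Mk)) ->
  maximalG G U M -> U x -> frattiniG G M (x ^+ p) -> M x.
Proof.
move=> hierK maxM Ux PhiMx; have [sM MU _ _] := maxM.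
have := hierK _ (maximal_cover_image maxM) (f x); rewrite gpowE -coverX //.
case=> [| m Mm fmx]; first exact: frattini_cover_image sM MU PhiMx.
exact: cover_fiber maxM Mm Ux fmx.
Qed.

End frattini_cover.

Theorem mainTheorem20 (p : nat) (G : proPGroup p) :
  prime p ->
  (forall U : set G, pOpenSubgroup U ->
     exists (K : proPGroup p) (phi : G -> K),
       frattini_cover U phi /\
       (forall M : set K, pMaximal [set: K] M -> pHierarchical M (pFrattini M))) ->
  strongly_frattini_resistant G.
Proof.
move=> p_pr covers H [aH clH] x; rewrite gpowE => PhiHx.
apply: contrapT => Hx.
have [N [aN oN nN _ HNx]] := open_normal_separate clH Hx openT I.
have clN := open_abs_subgroup_closed aN oN.
have [n [s [_ s_cover s_uniq]]] := pg_ppower (conj (conj (conj aN clN) oN) nN).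
have [U [M [oU oM maxM HM [Ux Mx]]]] :=
  exists_maximal_separating aN oN nN s_cover s_uniq aH HNx.
have [[aM _] _ _ _] := maxM.
have PhiMx := frattini_sub_open p_pr (conj aH clH) aM oM HM PhiHx.
have [K [f [fc hierK]]] := covers U oU.
exact/Mx/(frattini_cover_hierarchical oU.1 fc hierK maxM Ux PhiMx).
Qed.
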